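(* Let $I$ be a finite set of positive integers and $m=\max(I\cup\{0\})$. Then for every integer $n\ge m+2$, $$d(I;n)\ge |d(I;-1)|.$$
   Context: For $n>m$, $d(I;n)$ is the number of permutations $\pi\in\mathfrak S_n$ with $\{i\mid\pi_i>\pi_{i+1}\}=I$; it is a polynomial in $n$, and $d(I;-1)$ is the value of this polynomial at $-1$. *)

From HB Require Import structures.
From mathcomp Require Import all_boot all_order all_algebra all_fingroup.
Set Implicit Arguments. Unset Strict Implicit. Unset Printing Implicit Defensive.
Import Order.TTheory GRing.Theory Num.Theory.

(* Positions are 1-indexed as in the paper: pi = pi_1 ... pi_n, where
   pi_(k+1) is represented by s (k : 'I_n) (0-indexed ordinal).
   i (>= 1) is a descent of s iff pi_i > pi_(i+1), i.e. s (i-1) > s i. *)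
Definition is_descent (n : nat) (s : 'S_n) (i : nat) : bool :=
  [exists j : 'I_n, exists k : 'I_n,
     [&& 0 < i, val j == i.-1, val k == i & s k < s j]].

Definition has_descent_set (I : seq nat) (n : nat) (s : 'S_n) : bool :=
  all (is_descent s) I && [forall j : 'I_n, is_descent s j ==> (val j \in I)].

Definition dcount (I : seq nat) (n : nat) : nat :=
  #|[set s : 'S_n | has_descent_set I s]|.

(* Let m = max I and J = I \ {m}.  A permutation of [0, N), N > m, whose
   descents below position m form J and which has no descent after m is
   determined by the set of its first m values (binom(N, m) choices) and the
   relative order of those values, which has descent set J; its own descent
   set is I or J according to whether m is a descent.  Hence
   d(I;N) + d(J;N) = binom(N, m) d(J;m) for N > m, so the polynomial
   interpolating d(I;_) takes at -1 the value (-1)^m d(J;m) - d(J;-1).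
   Induction on |I| then gives 0 <= (-1)^(max I) d(I;-1) <= d(I;n) for
   n >= max I + 2, using also binom(n-1, m) d(J;m) <= d(I;n), obtained by
   inserting a new minimum at position m.  Permutations are encoded as lists
   built by inserting a new minimum, which turns the binomial count into a
   recursion on N. *)

From HB Require Import structures.
From mathcomp Require Import all_boot all_order all_algebra all_fingroup.
From mathcomp Require Import zify ring.
Import Order.TTheory GRing.Theory Num.Theory.
Set Implicit Arguments. Unset Strict Implicit. Unset Printing Implicit Defensive.

Definition descent_word (s : seq nat) : bitseq :=
  mkseq (fun i => nth 0 s i.+1 < nth 0 s i) (size s).-1.

Definition insert_min (s : seq nat) (q : nat) : seq nat :=
  take q (map succn s) ++ 0 :: drop q (map succn s).

Definition insert_descent (w : bitseq) (n q : nat) : bitseq :=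
  mkseq (fun i => if i.+1 < q then nth false w i else if i.+1 == q then true
                  else if i == q then false else nth false w i.-1) n.

Definition perms n := permutations (iota 0 n).

Lemma count_sum_nat (T : eqType) (P : pred T) (r : seq T) :
  count P r = \sum_(x <- r) P x.
Proof. by rewrite -sum1_count big_mkcond. Qed.

Lemma size_descent_word s : size (descent_word s) = (size s).-1.
Proof. exact: size_mkseq. Qed.

Lemma size_perms s n : s \in perms n -> size s = n.
Proof. by rewrite mem_permutations => /perm_size; rewrite size_iota. Qed.

Lemma size_descent_word_perms s n : s \in perms n -> size (descent_word s) = n.-1.
Proof. by move=> /size_perms sn; rewrite size_descent_word sn. Qed.

Lemma size_insert_min s q : size (insert_min s q) = (size s).+1.
Proof. by rewrite /insert_min size_cat /= addnS -size_cat cat_take_drop size_map. Qed.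

Lemma nth_insert_min s q j : q <= size s -> j <= size s ->
  nth 0 (insert_min s q) j = if j < q then (nth 0 s j).+1 else if j == q then 0
                             else (nth 0 s j.-1).+1.
Proof.
move=> qs js; rewrite /insert_min nth_cat size_take size_map.
have -> : (if q < size s then q else size s) = q by case: ltnP => //; lia.
case: ltnP => jq; first by rewrite nth_take // (nth_map 0) //; lia.
case: eqP => [->|jq']; first by rewrite subnn.
have -> : j - q = (j - q).-1.+1 by lia.
rewrite /= nth_drop (nth_map 0); last by lia.
by congr (nth _ _ _).+1; lia.
Qed.

Lemma descent_word_insert_min s q : q <= size s ->
  descent_word (insert_min s q) = insert_descent (descent_word s) (size s) q.
Proof.
move=> qs; rewrite /descent_word /insert_descent size_insert_min /=.
apply: (@eq_from_nth _ false) => [|i]; rewrite !size_mkseq // => ilt.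
rewrite [LHS]nth_mkseq // [RHS]nth_mkseq // !nth_insert_min //; try lia.
have [iq|qi] := ltnP i.+1 q; first by rewrite (_ : i < q) ?nth_mkseq //; lia.
have [<-|iq] := eqVneq i.+1 q; first by rewrite ltnSn.
rewrite (_ : i < q = false); last by lia.
have [//|iq'] := eqVneq i q.
by rewrite nth_mkseq ?ltnS; [have -> : i.+1.-1 = i.-1.+1 by lia | lia].
Qed.

Lemma index_insert_min s q : q <= size s -> index 0 (insert_min s q) = q.
Proof.
move=> qs; rewrite /insert_min index_cat.
have -> : (0 \in take q (map succn s)) = false.
  by apply/negbTE/negP => /mem_take/mapP [x _].
by rewrite /= size_take size_map; case: ltnP => h; lia.
Qed.

Lemma insert_min_inj s1 s2 q1 q2 : size s1 = size s2 ->
  q1 <= size s1 -> q2 <= size s2 ->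
  insert_min s1 q1 = insert_min s2 q2 -> s1 = s2 /\ q1 = q2.
Proof.
move=> ss q1s q2s e.
have eq : q1 = q2 by rewrite -(index_insert_min q1s) -(index_insert_min q2s) e.
subst q2; split => //.
move: e; rewrite /insert_min => /eqP; rewrite eqseq_cat; last first.
  by rewrite !size_take !size_map ss.
case/andP => /eqP e1; rewrite eqseq_cons => /andP [_ /eqP e2].
apply: (inj_map succn_inj).
by rewrite -(cat_take_drop q1 (map succn s1)) e1 e2 cat_take_drop.
Qed.

Lemma perm_insert_min s q n :
  perm_eq s (iota 0 n) -> perm_eq (insert_min s q) (iota 0 n.+1).
Proof.
move=> ps; rewrite /insert_min -cat1s perm_catCA /= cat_take_drop perm_cons.
rewrite (iotaDl 1 0 n) (eq_map (add1n)); exact: perm_map.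
Qed.

Lemma perms_S n :
  perm_eq (perms n.+1) [seq insert_min s q | s <- perms n, q <- iota 0 n.+1].
Proof.
set L := [seq insert_min s q | s <- perms n, q <- iota 0 n.+1].
have uniqL : uniq L.
  apply: allpairs_uniq; [exact: permutations_uniq | exact: iota_uniq |].
  move=> [s1 q1] [s2 q2] /allpairsP [[a b] [ha hb [-> ->]]].
  move=> /allpairsP [[c d] [hc hd [-> ->]]] /= e.
  move: hb hd; rewrite !mem_iota !add0n !ltnS => hb hd.
  have [sa sc] := (size_perms ha, size_perms hc).
  by have [|||-> ->] := insert_min_inj _ _ _ e; rewrite ?sa ?sc.
have subL : {subset L <= perms n.+1}.
  move=> x /allpairsP [[a b] [/= ha hb ->]].
  by rewrite mem_permutations; apply: perm_insert_min; rewrite -mem_permutations.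
have sizeL : size (perms n.+1) <= size L.
  by rewrite size_allpairs !size_permutations ?iota_uniq // !size_iota factS mulnC.
have [_ eqL] := uniq_min_size uniqL subL sizeL.
by rewrite perm_sym uniq_perm ?permutations_uniq.
Qed.

Lemma count_perms_S (F : pred bitseq) n :
  count (fun s => F (descent_word s)) (perms n.+1) =
  \sum_(s <- perms n) \sum_(q < n.+1) F (insert_descent (descent_word s) n q).
Proof.
rewrite (seq.permP (perms_S n)) count_sum_nat big_allpairs_dep.
apply: eq_big_seq => s /size_perms sn.
rewrite -(big_mkord xpredT (fun q => F (insert_descent (descent_word s) n q) : nat)).
rewrite /index_iota subn0.
apply: eq_big_seq => q; rewrite mem_iota => /andP [_ hq].
by rewrite descent_word_insert_min sn //; lia.
Qed.

Definition false_from (r : nat) (w : bitseq) := all negb (drop r w).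

Lemma false_fromP r w :
  reflect (forall i, r <= i < size w -> nth false w i = false) (false_from r w).
Proof.
apply: (iffP (all_nthP false)); rewrite size_drop => H i.
  move=> /andP [ri iw]; have := H (i - r); rewrite nth_drop subnKC //.
  by move=> /(_ ltac:(lia)) /negbTE.
by move=> ir; rewrite nth_drop H //; lia.
Qed.

Lemma take_mkseq (T : Type) (f : nat -> T) k n :
  take k (mkseq f n) = mkseq f (minn k n).
Proof. by rewrite /mkseq -map_take take_iota. Qed.

Lemma size_insert_descent w n q : size (insert_descent w n q) = n.
Proof. exact: size_mkseq. Qed.

Lemma nth_insert_descent w n q i : i < n -> nth false (insert_descent w n q) i =
  if i.+1 < q then nth false w i else if i.+1 == q then true
  else if i == q then false else nth false w i.-1.
Proof. by move=> h; rewrite nth_mkseq. Qed.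

Section InsertDescent.
Variables (w : bitseq) (n r : nat).
Hypothesis size_w : size w = n.-1.

Lemma take_insert_descent_at : r <= n ->
  take r.-1 (insert_descent w n r) = take r.-1 w.
Proof.
move=> rn; rewrite take_mkseq.
apply: (@eq_from_nth _ false) => [|i]; rewrite size_mkseq.
  by rewrite size_take size_w; case: ltnP => h; lia.
by move=> hi; rewrite nth_mkseq // nth_take ?ifT //; lia.
Qed.

Lemma false_from_insert_descent_at : r <= n ->
  false_from r (insert_descent w n r) = false_from r w.
Proof.
move=> rn; apply/false_fromP/false_fromP;
  rewrite size_insert_descent size_w => H i /andP [ri iw].
  have := H i.+1; rewrite nth_insert_descent; last by lia.
  by rewrite !ifF; [apply; lia | lia | lia | lia].
rewrite nth_insert_descent // ifF; last by lia.
rewrite ifF; last by lia.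
by case: eqP => // /eqP ne; apply: H; lia.
Qed.

Lemma false_from_insert_descent_gt q : r < q <= n ->
  false_from r (insert_descent w n q) = false.
Proof.
move=> /andP [rq qn]; apply/negbTE/negP => /false_fromP /(_ q.-1).
rewrite size_insert_descent nth_insert_descent; last by lia.
by rewrite ifF ?ifT; [move/(_ ltac:(lia)) | apply/eqP; lia | lia].
Qed.

Lemma take_insert_descent_lt q : q < r -> r <= n.+1 ->
  take r.-1 (insert_descent w n q) =
  take r.-1 (insert_descent (take r.-2 w) r.-1 q).
Proof.
move=> qr rn; rewrite !take_mkseq /mkseq.
rewrite (_ : minn r.-1 n = r.-1) ?minnn; last by lia.
apply/eq_in_map => i; rewrite mem_iota /= => hi.
case: ltnP => h1; first by rewrite nth_take //; lia.
case: eqP => // h2; case: eqP => // h3.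
by rewrite nth_take //; lia.
Qed.

Lemma false_from_insert_descent_lt q : q < r -> r <= n.+1 ->
  false_from r (insert_descent w n q) = false_from r.-1 w.
Proof.
move=> qr rn; apply/false_fromP/false_fromP;
  rewrite size_insert_descent size_w => H i /andP [ri iw].
  have := H i.+1; rewrite nth_insert_descent; last by lia.
  by rewrite !ifF; [apply; lia | lia | lia | lia].
by rewrite nth_insert_descent // !ifF; [apply: H; lia | lia | lia | lia].
Qed.

End InsertDescent.

(* Permutations of [0, N) whose descents at positions 1, ..., r-1 form a
   word in Q and which have no descent after position r; the descent at r
   itself is unconstrained. *)
Definition prefix_count (Q : pred bitseq) r N :=
  count (fun s => Q (take r.-1 (descent_word s)) && false_from r (descent_word s))
        (perms N).

Definition prefix_insert (Q : pred bitseq) r q : pred bitseq :=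
  fun w => Q (take r.-1 (insert_descent w r.-1 q)).

Lemma sum_insert_descent (Q : pred bitseq) r n w : r <= n.+1 -> size w = n.-1 ->
  \sum_(q < n.+1) (Q (take r.-1 (insert_descent w n q)) &&
                   false_from r (insert_descent w n q)) =
  \sum_(q < r) (prefix_insert Q r q (take r.-2 w) && false_from r.-1 w)
  + (if r <= n then (Q (take r.-1 w) && false_from r w : nat) else 0).
Proof.
move=> rn sw.
rewrite -(big_mkord xpredT (fun q => (Q (take r.-1 (insert_descent w n q)) &&
                                       false_from r (insert_descent w n q)) : nat)).
rewrite (big_cat_nat _ (n := r)) //= big_mkord; congr (_ + _).
  apply: eq_bigr => q _; have qr := ltn_ord q.
  rewrite /prefix_insert -(take_insert_descent_lt sw qr rn).
  by rewrite (false_from_insert_descent_lt sw qr rn).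
have [rn'|nr] := leqP r n; last by rewrite big_geq.
rewrite big_ltn // take_insert_descent_at // false_from_insert_descent_at //.
rewrite big1_seq ?addn0 // => q; rewrite mem_index_iota => rqn.
by rewrite false_from_insert_descent_gt ?andbF //; lia.
Qed.

Lemma prefix_countS Q r n : r <= n.+1 ->
  prefix_count Q r n.+1 =
  (if r <= n then prefix_count Q r n else 0)
  + \sum_(q < r) prefix_count (prefix_insert Q r q) r.-1 n.
Proof.
move=> rn; rewrite {1}/prefix_count
  (count_perms_S (fun w => Q (take r.-1 w) && false_from r w)).
rewrite (eq_big_seq _ (fun s sP => sum_insert_descent Q rn (size_descent_word_perms sP))).
rewrite big_split /= exchange_big /= addnC; congr (_ + _).
  by case: ifP => _; [rewrite /prefix_count count_sum_nat | rewrite big1].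
by apply: eq_bigr => q _; rewrite /prefix_count count_sum_nat.
Qed.

Lemma prefix_count_bin r Q N : r <= N ->
  prefix_count Q r N = 'C(N, r) * prefix_count Q r r.
Proof.
elim: r Q N => [|r IHr] Q N.
  move=> _; rewrite bin0 mul1n; elim: N => // N IHN.
  by rewrite prefix_countS // big_ord0 addn0.
set S := fun n => \sum_(q < r.+1) prefix_count (prefix_insert Q r.+1 q) r n.
have SE n : r <= n -> S n = 'C(n, r) * S r.
  by move=> rn; rewrite /S big_distrr /=; apply: eq_bigr => q _; rewrite IHr.
have Sr : prefix_count Q r.+1 r.+1 = S r by rewrite prefix_countS // ltnn.
elim: N => // N IHN hN.
have [Nr|rN|<-] := ltngtP N r; [lia | | by rewrite binn mul1n].
by rewrite prefix_countS // rN IHN // -/(S N) SE ?Sr ?binS ?mulnDl //; lia.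
Qed.

Definition perm_seq N (s : 'S_N) : seq nat := [seq val (s j) | j <- enum 'I_N].

Definition char_word (K : seq nat) n : bitseq := mkseq (fun i => i.+1 \in K) n.

Lemma size_char_word K n : size (char_word K n) = n.
Proof. exact: size_mkseq. Qed.

Lemma nth_char_word K n i : i < n -> nth false (char_word K n) i = (i.+1 \in K).
Proof. exact: nth_mkseq. Qed.

Lemma take_char_word K n k : k <= n -> take k (char_word K n) = char_word K k.
Proof. by move=> kn; rewrite take_mkseq (minn_idPl kn). Qed.

Lemma false_from_char_word K r n :
  all (fun i => i <= r) K -> false_from r (char_word K n).
Proof.
move=> /allP Kr; apply/false_fromP => i; rewrite size_char_word => /andP [ri iN].
by rewrite nth_char_word //; apply/negbTE/negP => /Kr; lia.
Qed.

Lemma nth_perm_seq N (s : 'S_N) (j : 'I_N) : nth 0 (perm_seq s) j = s j.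
Proof. by rewrite /perm_seq (nth_map j) ?size_enum_ord // nth_ord_enum. Qed.

Lemma size_perm_seq N (s : 'S_N) : size (perm_seq s) = N.
Proof. by rewrite size_map size_enum_ord. Qed.

Lemma perm_seq_inj N : injective (@perm_seq N).
Proof.
move=> s t e; apply/permP => j; apply: val_inj => /=.
by rewrite -!nth_perm_seq e.
Qed.

Lemma perm_seq_perms N (s : 'S_N) : perm_seq s \in perms N.
Proof.
rewrite mem_permutations -val_enum_ord.
rewrite (_ : perm_seq s = map val (map s (enum 'I_N))); last by rewrite -map_comp.
apply/perm_map/uniq_perm; [|exact: enum_uniq|].
  by rewrite map_inj_uniq ?enum_uniq //; exact: perm_inj.
move=> x; rewrite mem_enum; apply/mapP; exists ((s^-1)%g x); rewrite ?mem_enum //.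
by rewrite permKV.
Qed.

Lemma is_descentE N (s : 'S_N) i :
  is_descent s i = (0 < i) && nth false (descent_word (perm_seq s)) i.-1.
Proof.
rewrite /descent_word size_perm_seq.
apply/existsP/idP => [[j /existsP [k /and4P [i0 /eqP ej /eqP ek lt]]]|/andP [i0]].
  rewrite /= in ej ek; rewrite i0 nth_mkseq; last by have := ltn_ord k; lia.
  by rewrite (_ : i.-1.+1 = k) -?ej ?nth_perm_seq //; lia.
have [iN|] := ltnP i.-1 N.-1; last by move=> h; rewrite nth_default // size_mkseq.
rewrite nth_mkseq // (_ : i.-1.+1 = i); last by lia.
have [i1N i'N] : i < N /\ i.-1 < N by lia.
rewrite (nth_perm_seq s (Ordinal i1N)) (nth_perm_seq s (Ordinal i'N)) => lt.
by exists (Ordinal i'N); apply/existsP; exists (Ordinal i1N); rewrite i0 /= !eqxx.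
Qed.

Lemma has_descent_setE I N (s : 'S_N) : all (fun i => 0 < i < N) I ->
  has_descent_set I s = (descent_word (perm_seq s) == char_word I N.-1).
Proof.
move=> /allP Irange; set w := descent_word _.
have sw : size w = N.-1 by rewrite size_descent_word size_perm_seq.
rewrite /has_descent_set; apply/andP/eqP => [[/allP Hdes /forallP Hin]|wE].
  apply: (@eq_from_nth _ false) => [|i]; first by rewrite size_char_word sw.
  rewrite sw => iN; rewrite nth_char_word //; apply/idP/idP => [wi|iI].
    have iN' : i.+1 < N by lia.
    by have := Hin (Ordinal iN'); rewrite is_descentE -/w /= wi => /implyP; apply.
  by have := Hdes _ iI; rewrite is_descentE -/w => /andP [].
split; first apply/allP => i iI.
  have /andP [i0 iN] := Irange i iI.
  rewrite is_descentE -/w wE i0 nth_char_word; last by lia.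
  by rewrite (_ : i.-1.+1 = i) //; lia.
apply/forallP => j; rewrite is_descentE -/w wE; apply/implyP => /andP [j0].
have [jN|] := ltnP j.-1 N.-1; last by move=> h; rewrite nth_default // size_char_word.
by rewrite nth_char_word // (_ : j.-1.+1 = j) //; lia.
Qed.

Lemma dcount_char_word I N : all (fun i => 0 < i < N) I ->
  dcount I N = count (fun s => descent_word s == char_word I N.-1) (perms N).
Proof.
move=> Irange; have card_count (P : pred 'S_N) : #|[set s | P s]| = count P (enum 'S_N).
  by rewrite cardsE cardE /enum_mem size_filter filter_predT.
rewrite /dcount card_count.
rewrite (eq_count (a2 := fun s => descent_word (perm_seq s) == char_word I N.-1));
  last by move=> s; rewrite /= has_descent_setE.
rewrite -(count_map (@perm_seq N) (fun s => descent_word s == char_word I N.-1)).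
have uniq_map : uniq (map (@perm_seq N) (enum 'S_N)).
  by rewrite map_inj_uniq ?enum_uniq //; exact: perm_seq_inj.
have sub_map : {subset map (@perm_seq N) (enum 'S_N) <= perms N}.
  by move=> x /mapP [s _ ->]; exact: perm_seq_perms.
have size_map : size (perms N) <= size (map (@perm_seq N) (enum 'S_N)).
  by rewrite size_map -cardT card_Sn size_permutations ?iota_uniq // size_iota.
have [_ eq_perms] := uniq_min_size uniq_map sub_map size_map.
by apply/seq.permP/uniq_perm; rewrite ?permutations_uniq.
Qed.

Lemma dcount_nil N : dcount [::] N = 1.
Proof.
rewrite dcount_char_word // -[RHS](bin0 N) -[RHS]muln1.
rewrite -[1 in RHS](_ : prefix_count predT 0 0 = 1) // -prefix_count_bin //.
apply: eq_in_count => s /size_descent_word_perms sw /=.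
apply/eqP/false_fromP => [-> i /andP [_]|no_descent].
  by rewrite size_char_word => iN; rewrite nth_char_word.
apply: (@eq_from_nth _ false) => [|i iN]; first by rewrite size_char_word sw.
by rewrite no_descent ?iN // nth_char_word // -sw.
Qed.

Definition below m (I : seq nat) := [seq i <- I | i < m].

Lemma size_below m I : m \in I -> size (below m I) < size I.
Proof.
move=> mI; rewrite size_filter -[X in _ < X](count_predC (fun i => i < m) I).
rewrite -[X in X < _]addn0 ltn_add2l -has_count.
by apply/hasP; exists m; rewrite //= ltnn.
Qed.

Section MaxDescent.
Variables (I : seq nat) (m : nat).
Hypothesis Ipos : all (fun i => 0 < i) I.
Hypothesis mI : m \in I.
Hypothesis Im : all (fun i => i <= m) I.

Let m_gt0 : 0 < m := allP Ipos m mI.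

Lemma below_range N : m <= N -> all (fun i => 0 < i < N) (below m I).
Proof.
move=> mN; apply/allP => i; rewrite mem_filter => /andP [im iI].
by rewrite (allP Ipos _ iI); lia.
Qed.

Lemma max_range N : m < N -> all (fun i => 0 < i < N) I.
Proof.
move=> mN; apply/allP => i iI.
by rewrite (allP Ipos _ iI) /=; have := allP Im _ iI; lia.
Qed.

Lemma nth_char_word_below n : m <= n ->
  nth false (char_word (below m I) n) m.-1 = false.
Proof.
move=> mn; rewrite nth_char_word; last by lia.
by rewrite mem_filter (_ : m.-1.+1 = m) ?ltnn //; lia.
Qed.

Lemma nth_char_word_max n : m <= n -> nth false (char_word I n) m.-1.
Proof. by move=> mn; rewrite nth_char_word (_ : m.-1.+1 = m) //; lia. Qed.

Lemma char_word_below_prefix : char_word (below m I) m.-1 = char_word I m.-1.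
Proof.
apply/eq_in_map => i; rewrite mem_iota /= => hi.
by rewrite mem_filter (_ : i.+1 < m) //; lia.
Qed.

Lemma char_word_max_split w : m <= size w ->
  ((take m.-1 w == char_word I m.-1) && false_from m w : nat) =
  (w == char_word I (size w)) + (w == char_word (below m I) (size w)).
Proof.
move=> mw; have Imi := allP Im.
have below_le : all (fun i => i <= m) (below m I).
  by apply/allP => i; rewrite mem_filter => /andP [h _]; lia.
have take_m K : take m.-1 (char_word K (size w)) = char_word K m.-1.
  by rewrite take_char_word //; lia.
have [wI|wNI] := eqVneq w (char_word I (size w)).
  have -> : (w == char_word (below m I) (size w)) = false.
    apply/negbTE/eqP => wJ.
    by have := nth_char_word_below mw; rewrite -wJ wI nth_char_word_max.
  by rewrite {1 2}wI take_m false_from_char_word // eqxx.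
have [wJ|wNJ] := eqVneq w (char_word (below m I) (size w)).
  by rewrite {1 2}wJ take_m char_word_below_prefix false_from_char_word // eqxx.
rewrite /=; case: eqP => //= prefix.
suff -> : false_from m w = false by [].
apply/negP => /false_fromP tail.
have wE i : i < size w -> i != m.-1 -> nth false w i = (i.+1 \in I).
  move=> iw ne; have [im|mi] := ltnP i m.-1.
    by rewrite -(nth_take _ im) prefix nth_char_word.
  rewrite tail; last by rewrite iw andbT; lia.
  by apply/esym/negbTE/negP => /Imi; lia.
have [wm|wNm] := boolP (nth false w m.-1).
  move/negP: wNI; apply; apply/eqP/(@eq_from_nth _ false) => [|i iw].
    by rewrite size_char_word.
  rewrite nth_char_word //; have [->|ne] := eqVneq i m.-1; last exact: wE.
  by rewrite wm (_ : m.-1.+1 = m) //; lia.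
move/negP: wNJ; apply; apply/eqP/(@eq_from_nth _ false) => [|i iw].
  by rewrite size_char_word.
rewrite nth_char_word // mem_filter; have [->|ne] := eqVneq i m.-1.
  by rewrite (negbTE wNm) (_ : m.-1.+1 = m) ?ltnn //; lia.
rewrite wE //; case: (ltnP i.+1 m) => //= h.
by apply/negbTE/negP => /Imi; lia.
Qed.

Lemma prefix_count_max :
  prefix_count (fun w => w == char_word I m.-1) m m = dcount (below m I) m.
Proof.
rewrite (dcount_char_word (below_range (leqnn m))) /prefix_count.
apply: eq_in_count => s /size_descent_word_perms sw.
rewrite take_oversize ?sw // char_word_below_prefix.
by rewrite (_ : false_from m _) ?andbT //; apply/false_fromP; lia.
Qed.

Lemma dcount_add_below N : m < N ->
  dcount I N + dcount (below m I) N = 'C(N, m) * dcount (below m I) m.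
Proof.
move=> mN; rewrite -prefix_count_max -prefix_count_bin; last by lia.
rewrite (dcount_char_word (max_range mN)) (dcount_char_word (below_range (ltnW mN))).
rewrite /prefix_count !count_sum_nat -big_split; apply: eq_big_seq => s sN.
have sw := size_descent_word_perms sN.
by rewrite char_word_max_split sw //; lia.
Qed.

Lemma bin_dcount_below_le n : m <= n ->
  'C(n, m) * dcount (below m I) m <= dcount I n.+1.
Proof.
move=> mn; have mn1 : m < n.+1 by lia.
rewrite -prefix_count_max -prefix_count_bin // (dcount_char_word (max_range mn1)).
rewrite (count_perms_S (fun w => w == char_word I n)) /prefix_count count_sum_nat.
rewrite big_seq [X in _ <= X]big_seq; apply: leq_sum => s /size_descent_word_perms sw.
rewrite (bigD1 (Ordinal mn1)) //= -[X in X <= _]addn0 leq_add //.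
have := char_word_max_split (w := insert_descent (descent_word s) n m).
rewrite size_insert_descent take_insert_descent_at // false_from_insert_descent_at //.
move=> -> //; rewrite -[X in _ <= X]addn0 leq_add2l leqn0 eqb0.
apply/eqP => e; have := nth_char_word_below mn.
rewrite -e nth_insert_descent; last by lia.
by rewrite (_ : m.-1.+1 = m) ?ltnn ?eqxx //; lia.
Qed.

Local Open Scope ring_scope.

(* [e] plays the part of (-1)^(max J) d(J;-1), with J = below m I. *)
Lemma dcount_N1_step (e : rat) m' : (m' < m)%N -> 0 <= e ->
  (forall n, (m' + 2 <= n)%N -> e <= (dcount (below m I) n)%:R) ->
  0 <= (dcount (below m I) m)%:R - (-1) ^+ (m + m') * e /\
  forall n, (m + 2 <= n)%N ->
    (dcount (below m I) m)%:R - (-1) ^+ (m + m') * e <= (dcount I n)%:R.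
Proof.
move=> m'm e_ge0 e_le; set c := dcount (below m I) m; set v := _ - _.
have c_le n : (m + 2 <= n)%N -> (m.+1 * c <= dcount I n)%N.
  move=> mn; have mn' : (m <= n.-1)%N by lia.
  have := bin_dcount_below_le mn'; rewrite (_ : n.-1.+1 = n); last by lia.
  apply: leq_trans; rewrite leq_mul2r -{1}(binSn m) leq_bin2l ?orbT //; lia.
have [odd_mm'|even_mm'] := boolP (odd (m + m')).
  rewrite /v -signr_odd odd_mm' expr1 mulN1r opprK.
  split => [|n mn]; first by rewrite addr_ge0.
  have hJ := e_le m.+1 ltac:(lia).
  have hR := dcount_add_below (ltnSn m); rewrite binSn in hR.
  have hI := bin_dcount_below_le (leqnn m); rewrite binn mul1n in hI.
  apply: le_trans (lerD (lexx _) hJ) _; rewrite -natrD ler_nat.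
  by apply: leq_trans (c_le n mn); rewrite -hR leq_add2r.
have m'm2 : (m' + 2 <= m)%N.
  have : m != m'.+1.
    by apply: contraNneq even_mm' => ->; rewrite addSn addnn /= odd_double.
  by lia.
rewrite /v -signr_odd (negbTE even_mm') expr0 mul1r.
split => [|n mn]; first by rewrite subr_ge0; exact: e_le.
apply: (@le_trans _ _ c%:R); first by rewrite lerBlDr lerDl.
by rewrite ler_nat; apply: leq_trans (c_le n mn); rewrite leq_pmull.
Qed.
End MaxDescent.

Lemma bigmax_seq_mem (I : seq nat) : I != [::] -> \max_(i <- I) i \in I.
Proof.
elim: I => // x I IH _; rewrite big_cons inE.
have [->|/IH] := eqVneq I [::]; first by rewrite big_nil maxn0 eqxx.
by rewrite /maxn; case: ltnP => _ maxI; rewrite ?maxI ?orbT ?eqxx.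
Qed.

Local Open Scope ring_scope.

Definition binpoly (F : numFieldType) m : {poly F} :=
  (m`!%:R)^-1 *: \prod_(i < m) ('X - i%:R%:P).

Lemma prod_natr_sub_ffact (R : pzRingType) k m :
  \prod_(i < m) (k%:R - i%:R : R) = (k ^_ m)%:R.
Proof.
elim: m => [|m IH]; first by rewrite big_ord0 ffactn0.
rewrite big_ord_recr /= IH ffactnSr natrM.
have [mk|km] := leqP m k; first by rewrite natrB.
by rewrite ffact_small // !mul0r.
Qed.

Lemma prod_N1_sub_fact (R : comPzRingType) m :
  \prod_(i < m) (-1 - i%:R : R) = (-1) ^+ m * m`!%:R.
Proof.
elim: m => [|m IH]; first by rewrite big_ord0 expr0 fact0 mul1r.
by rewrite big_ord_recr /= IH factS natrM exprS -natr1; ring.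
Qed.

Lemma horner_binpoly_nat (F : numFieldType) m k : (binpoly F m).[k%:R] = 'C(k, m)%:R.
Proof.
rewrite hornerZ horner_prod; under eq_bigr do rewrite hornerXsubC.
rewrite prod_natr_sub_ffact -bin_ffact natrM mulrCA mulVf ?mulr1 //.
by rewrite pnatr_eq0 -lt0n fact_gt0.
Qed.

Lemma horner_binpoly_N1 (F : numFieldType) m : (binpoly F m).[-1] = (-1) ^+ m.
Proof.
rewrite hornerZ horner_prod; under eq_bigr do rewrite hornerXsubC.
rewrite prod_N1_sub_fact mulrCA mulVf ?mulr1 //.
by rewrite pnatr_eq0 -lt0n fact_gt0.
Qed.

Lemma poly_eq_eventually (R : numDomainType) (p q : {poly R}) M :
  (forall k, (M < k)%N -> p.[k%:R] = q.[k%:R]) -> p = q.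
Proof.
move=> pq; apply/eqP; rewrite -subr_eq0; apply/negPn/negP => nz.
set xs := [seq (M.+1 + i)%:R : R | i <- iota 0 (size (p - q))].
have roots_xs : all (root (p - q)) xs.
  by apply/allP => _ /mapP [i _ ->]; rewrite rootE !hornerE pq ?subrr //; lia.
have uniq_xs : uniq xs.
  by rewrite map_inj_uniq ?iota_uniq // => i j /eqP; rewrite eqr_nat => /eqP; lia.
by have := max_poly_roots nz roots_xs uniq_xs; rewrite size_map size_iota ltnn.
Qed.

Lemma dcount_poly_N1_bounds (I : seq nat) (p : {poly rat}) M :
  all (fun i => 0 < i)%N I -> (\max_(i <- I) i <= M)%N ->
  (forall k, (M < k)%N -> p.[k%:R] = (dcount I k)%:R) ->
  0 <= (-1) ^+ (\max_(i <- I) i) * p.[-1] /\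
  forall n, (\max_(i <- I) i + 2 <= n)%N ->
    (-1) ^+ (\max_(i <- I) i) * p.[-1] <= (dcount I n)%:R.
Proof.
have [k] := ubnP (size I); elim: k I p M => // k IHk I p M /ltnSE sI Ipos IM pI.
have [I0|I_nil] := eqVneq I [::].
  rewrite I0 in pI *.
  have -> : p = 1.
    by apply: (poly_eq_eventually (M := M)) => j /pI ->; rewrite dcount_nil hornerC.
  by rewrite big_nil expr0 mul1r hornerC ler01; split=> // n _; rewrite dcount_nil.
set m := \max_(i <- I) i.
have mI : m \in I := bigmax_seq_mem I_nil.
have Im : all (fun i => i <= m)%N I by apply/allP => i iI; exact: leq_bigmax_seq.
set J := below m I; set c := dcount J m.
have m'm : (\max_(i <- J) i < m)%N.
  have m_gt0 : (0 < m)%N := allP Ipos m mI.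
  suff : (\max_(i <- J) i <= m.-1)%N by lia.
  by apply/bigmax_leqP_seq => i; rewrite mem_filter => /andP [im _] _; lia.
set p' := c%:R *: binpoly rat m - p.
have p'J j : (M < j)%N -> p'.[j%:R] = (dcount J j)%:R.
  move=> Mj; rewrite hornerD hornerN hornerZ horner_binpoly_nat pI //.
  apply/eqP; rewrite subr_eq -natrM -natrD mulnC -dcount_add_below //; last by lia.
  by rewrite addnC.
have Jpos : all (fun i => 0 < i)%N J.
  by apply/allP => i; rewrite mem_filter => /andP [_ /(allP Ipos)].
have [e_ge0 e_le] := IHk J p' M (leq_trans (size_below mI) sI) Jpos
  (leq_trans (ltnW m'm) (IM : m <= M)%N) p'J.
have -> : (-1) ^+ m * p.[-1] =
    c%:R - (-1) ^+ (m + \max_(i <- J) i) * ((-1) ^+ (\max_(i <- J) i) * p'.[-1]).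
  rewrite exprD -mulrA signrMK /p' hornerD hornerN hornerZ horner_binpoly_N1.
  by rewrite mulrBr (mulrC c%:R) signrMK opprB addrC subrK.
by have := dcount_N1_step Ipos mI Im m'm e_ge0 e_le.
Qed.

Unset Implicit Arguments.
Set Strict Implicit.

Theorem proposition3p9 (I : seq nat) (p : {poly rat}) :
  all (fun i => (0 < i)%N) I ->
  (forall k : nat, (\max_(i <- I) i < k)%N -> p.[k%:R] = (dcount I k)%:R) ->
  forall n : nat, (\max_(i <- I) i + 2 <= n)%N ->
    `|p.[-1]| <= (dcount I n)%:R.
Proof.
move=> Ipos pI n In.
have [sign_ge0 sign_le] := dcount_poly_N1_bounds Ipos (leqnn _) pI.
have <- : `|(-1) ^+ (\max_(i <- I) i) * p.[-1]| = `|p.[-1]|.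
  by rewrite normrM normrX normrN1 expr1n mul1r.
by rewrite ger0_norm //; exact: sign_le.
Qed.
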